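(* Let $G=(V,E)$ be an undirected graph that is a pseudo-clique of size $n\ge 3$ and cardinality $k\ge 0$. Then the tree width of $G$ is $n-1$.
   Context: An undirected graph $G=(V,E)$ is a pseudo-clique if $V$ can be partitioned into a set $V_{\mathit{main}}$ of main-nodes and, for each pair $u\neq v$ of main-nodes, a set $V_{u,v}$ of edge-nodes, such that for each such pair, writing $V_{u,v}=\{v_1,\dots,v_m\}$, the edges $(u,v_1),(v_1,v_2),\dots,(v_{m-1},v_m),(v_m,v)$ are present (so $u,v_1,\dots,v_m,v$ is a simple path from $u$ to $v$), and no other edges are present. The size of the pseudo-clique is $|V_{\mathit{main}}|$, and its cardinality is $\max_{u\neq v\in V_{\mathit{main}}}|V_{u,v}|$. *)

From mathcomp Require Import all_boot.
Set Implicit Arguments. Unset Strict Implicit. Unset Printing Implicit Defensive.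

(* A (finite, simple, undirected) graph is a symmetric irreflexive relation
   e : rel T on a finType T. *)

Definition path_edge (T : eqType) (u v : T) (p : seq T) (x y : T) : bool :=
  let s := u :: rcons p v in (x, y) \in zip s (behead s).

(* G = (T, e) is a pseudo-clique of size n and cardinality k, witnessed by
   the set of main-nodes Vmain and, for each pair u <> v of main nodes, the
   sequence f u v = [v_1; ...; v_m] of edge-nodes V_{u,v} (listed in the order
   of the path from u to v; f v u is the same set listed from v to u). *)
Definition pseudo_clique (T : finType) (e : rel T) (n k : nat) : Prop :=
  exists (Vmain : {set T}) (f : T -> T -> seq T),
  #|Vmain| = n /\
      (forall u v, u \in Vmain -> v \in Vmain -> u != v -> f v u = rev (f u v)) /\
      (forall u v, u \in Vmain -> v \in Vmain -> u != v ->
         uniq (f u v) /\ (forall x, x \in f u v -> x \notin Vmain)) /\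
      (forall u v u' v' x, u \in Vmain -> v \in Vmain -> u != v ->
         u' \in Vmain -> v' \in Vmain -> u' != v' ->
         x \in f u v -> x \in f u' v' ->
         (u = u' /\ v = v') \/ (u = v' /\ v = u')) /\
      (forall x, x \in Vmain \/
         exists u v, [/\ u \in Vmain, v \in Vmain, u != v & x \in f u v]) /\
      (forall x y, e x y <->
         exists u v, [/\ u \in Vmain, v \in Vmain, u != v & path_edge u v (f u v) x y]) /\
      k = \max_(u in Vmain) \max_(v in Vmain | v != u) size (f u v).

Definition is_tree (m : nat) (t : rel 'I_m) : Prop :=
  [/\ 0 < m, symmetric t, irreflexive t,
      (forall i j, connect t i j) &
      (forall c : seq 'I_m, uniq c -> 3 <= size c -> ~~ cycle t c)].

Definition tree_decomposition (T : finType) (e : rel T)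
    (m : nat) (t : rel 'I_m) (B : 'I_m -> {set T}) : Prop :=
  [/\ is_tree t,
      (forall x, exists i, x \in B i),
      (forall x y, e x y -> exists i, x \in B i /\ y \in B i) &
      (forall x i j, x \in B i -> x \in B j ->
         connect [rel a b | [&& t a b, x \in B a & x \in B b]] i j)].

Definition td_width (T : finType) (m : nat) (B : 'I_m -> {set T}) : nat :=
  (\max_(i < m) #|B i|) - 1.

Definition treewidth_eq (T : finType) (e : rel T) (w : nat) : Prop :=
  (exists m (t : rel 'I_m) (B : 'I_m -> {set T}),
      tree_decomposition e t B /\ td_width B = w) /\
  (forall m (t : rel 'I_m) (B : 'I_m -> {set T}),
      tree_decomposition e t B -> w <= td_width B).

(* Upper bound: take a root bag holding the n main nodes and, for every path
   w = u, v_1, ..., v_m, v of the pseudo-clique, a chain of bags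
   {w_k, w_(k+1), v} hanging off the root; every bag has at most
   max(n, 3) = n elements.
   Lower bound: each main node u together with the inner nodes of its paths
   towards main nodes of larger rank is a connected branch set; these n sets
   are pairwise disjoint and pairwise adjacent (a K_n minor).  In any tree
   decomposition the bags meeting a branch set form a subtree, these subtrees
   pairwise intersect, so by the Helly property of subtrees one bag meets all
   n branch sets and has at least n elements. *)

From mathcomp Require Import all_boot.
Set Implicit Arguments. Unset Strict Implicit. Unset Printing Implicit Defensive.

Section Restriction.
Variables (Y : finType) (r : rel Y).

Definition restr (P : pred Y) : rel Y := [rel a b | [&& r a b, P a & P b]].

Definition connected_on (P : pred Y) : Prop :=
  forall x y, P x -> P y -> connect (restr P) x y.

Lemma restr_sym P : symmetric r -> symmetric (restr P).
Proof. by move=> sr a b; rewrite /restr /= sr; case: (P a); case: (P b); rewrite ?andbF. Qed.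

Lemma restr_sub P : subrel (restr P) r.
Proof. by move=> a b /and3P[]. Qed.

Lemma connect_restr_mem P a b : connect (restr P) a b -> P a -> P b.
Proof.
move=> /connectP[p pp ->]; elim: p a pp => [//|y p IH] a /= /andP[/and3P[_ _ Py] pp] _.
exact: IH.
Qed.

Lemma path_restr P x s : all P (x :: s) -> path r x s -> path (restr P) x s.
Proof.
apply: sub_in_path => a b Pa Pb rab; rewrite -!topredE /= in Pa Pb.
by rewrite /restr /= rab Pa Pb.
Qed.

Lemma connect_restr (P : pred Y) a b :
  connect r a b -> (forall z, connect r a z -> P z) -> connect (restr P) a b.
Proof.
move=> /connectP[p pp ->] HP; apply/connectP; exists p => //.
by apply: path_restr (pp); apply/allP => z /(path_connect pp) /HP.
Qed.

End Restriction.

Section Tree.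
Variables (Y : finType) (t : rel Y).
Hypotheses (t_sym : symmetric t) (t_irr : irreflexive t)
  (t_conn : forall i j, connect t i j)
  (t_acyc : forall c : seq Y, uniq c -> 3 <= size c -> ~~ cycle t c).

Lemma adj_neq i j : t i j -> i != j.
Proof. by apply: contraTneq => ->; rewrite t_irr. Qed.

Definition branch (i j : Y) : {set Y} := [set y | connect (restr t (predC1 i)) j y].

Lemma branch_refl i j : j \in branch i j.
Proof. by rewrite inE connect0. Qed.

Lemma branch_neq i j y : y \in branch i j -> j != i -> y != i.
Proof. by rewrite inE => /connect_restr_mem; apply. Qed.

Lemma branch_exists i q : q != i -> exists2 j, t i j & q \in branch i j.
Proof.
move=> qi; case/connectP: (t_conn i q) => p pp lp; subst q.
case: (shortenP pp) qi => [[|j s]] /=; first by rewrite eqxx.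
move=> /andP[tij ps] /andP[ni _] _ _; exists j => //; rewrite inE.
apply/connectP; exists s => //; apply: path_restr ps.
by apply/allP => z zs; apply: contraNneq ni => <-.
Qed.

Lemma branch_cut i a b : t i a -> t i b -> a != b -> b \notin branch i a.
Proof.
move=> tia tib ab; rewrite inE; apply/negP => /connectP[p pp lp]; subst b.
case: (shortenP pp) tib ab => s ps us _ tib ab.
have ai : a != i by rewrite eq_sym adj_neq.
have ni : i \notin a :: s.
  rewrite inE negb_or eq_sym ai /=; apply/negP => iS.
  have := connect_restr_mem (path_connect ps (@mem_behead _ (a :: s) _ iS)) ai.
  by rewrite /= eqxx.
have sne : s != [::] by apply: contraNneq ab => ->.
apply: (negP (t_acyc (c := i :: a :: s) _ _)); first by rewrite /= ni.
  by case: s sne {ps us ni tib ab} => //= ? ?; rewrite !ltnS.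
rewrite /cycle /= tia rcons_path (t_sym (last a s)) tib andbT.
by apply: sub_path ps => x y /and3P[].
Qed.

Lemma branch_through (r : rel Y) i j p :
  subrel r t -> t i j -> p \in branch i j -> connect r i p -> r i j.
Proof.
move=> sr tij; rewrite inE => jp /connectP[q pq lq]; subst p.
have ji : j != i by rewrite eq_sym adj_neq.
move: jp; case: (shortenP pq) => [[|x s]] /=.
  by move=> _ _ _ /connect_restr_mem/(_ ji); rewrite /= eqxx.
move=> /andP[rix ps] /andP[ni _] _ jl.
case: (eqVneq x j) => [<- //|xj]; exfalso.
have xl : connect (restr t (predC1 i)) x (last x s).
  apply/connectP; exists s => //; apply: (@path_restr _ t); last first.
    by apply: sub_path ps => a b /sr.
  by apply/allP => z zs; apply: contraNneq ni => <-.
apply: (negP (branch_cut tij (sr _ _ rix) _)); first by rewrite eq_sym.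
rewrite inE; apply: (connect_trans jl).
by rewrite (sym_connect_sym (restr_sym _ t_sym)).
Qed.

Lemma connected_branch (S : pred Y) i j p :
  connected_on t S -> ~~ S i -> S p -> p \in branch i j ->
  forall y, S y -> y \in branch i j.
Proof.
move=> cS Si Sp pB y Sy; rewrite inE in pB; rewrite inE; apply: (connect_trans pB).
apply: connect_sub (cS _ _ Sp Sy) => a b /and3P[tab Sa Sb]; apply: connect1.
by rewrite /restr /= tab /=; apply/andP; split; apply: contraNneq Si => <-.
Qed.

Lemma branch_proper i j j' :
  t i j -> t j j' -> j' != i -> branch j j' \proper branch i j.
Proof.
move=> tij tjj' j'i; have ji : j != i by rewrite eq_sym adj_neq.
have j'j : j' != j by rewrite eq_sym adj_neq.
apply/properP; split; last first.
  by exists j; [exact: branch_refl | apply/negP => /branch_neq/(_ j'j); rewrite eqxx].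
apply/subsetP => y; rewrite !inE => jy.
have tji : t j i by rewrite t_sym.
have {}jy : connect (restr (restr t (predC1 j)) (predC1 i)) j' y.
  apply: connect_restr jy _ => z jz /=.
  by apply: contraNneq (branch_cut tjj' tji j'i) => <-; rewrite inE.
apply: (@connect_trans _ _ j').
  by apply: connect1; rewrite /restr /= tjj' ji.
apply: connect_sub jy => a b; rewrite /restr /= => /and3P[/and3P[tab _ _] ai bi].
by apply: connect1; rewrite /restr /= tab ai bi.
Qed.

Section Helly.
Variables (I : finType) (A : {set I}) (S : I -> pred Y).
Hypotheses (S_conn : forall u, u \in A -> connected_on t (S u))
  (S_meet : forall u v, u \in A -> v \in A -> exists2 y, S u y & S v y).

Definition avoiders_in_branch i j :=
  forall u, u \in A -> ~~ S u i -> forall y, S u y -> y \in branch i j.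

Lemma avoiders_in_branch_of u i j q :
  u \in A -> ~~ S u i -> S u q -> q \in branch i j -> avoiders_in_branch i j.
Proof.
move=> uA ui uq qB w wA wi y wy; have [p wp up] := S_meet wA uA.
exact: connected_branch (S_conn wA) wi wp (connected_branch (S_conn uA) ui uq qB up) _ wy.
Qed.

(* Walk away from [i] into the branch holding all subtrees that avoid [i];
   the branch strictly shrinks at each step. *)
Lemma helly_from i j :
  t i j -> avoiders_in_branch i j -> exists c, forall u, u \in A -> S u c.
Proof.
move: {2}#|branch i j| (leqnn #|branch i j|) => N; elim: N i j => [|N IH] i j.
  by rewrite leqn0 => /eqP/card0_eq/(_ j); rewrite branch_refl.
move=> bound tij inv.
case: (boolP [forall u in A, S u i]) => [/forall_inP all_i|]; first by exists i.
rewrite negb_forall_in => /existsP[u0 /andP[u0A u0i]].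
case: (boolP [forall u in A, S u j]) => [/forall_inP all_j|]; first by exists j.
rewrite negb_forall_in => /existsP[w /andP[wA wj]].
have miss_i u : u \in A -> ~~ S u j -> ~~ S u i.
  move=> uA; apply: contra => ui; have [p up u0p] := S_meet uA u0A.
  have /and3P[] // := @branch_through (restr t (S u)) i j p
    (@restr_sub _ t _) tij (inv _ u0A u0i _ u0p) (S_conn uA ui up).
have [q wq _] := S_meet wA wA.
have qj : q != j by apply: contraNneq wj => <-.
have [j' tjj' qB] := branch_exists qj.
have j'i : j' != i.
  apply/eqP => j'i; subst j'; rewrite inE in qB.
  have /and3P[_ /=] := @branch_through (restr t (predC1 j)) i j q
    (@restr_sub _ t _) tij (inv _ wA (miss_i _ wA wj) _ wq) qB.
  by rewrite eqxx.
apply: (IH j j' _ tjj' (avoiders_in_branch_of wA wj wq qB)).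
by rewrite -ltnS; apply: leq_trans (proper_card (branch_proper tij tjj' j'i)) bound.
Qed.

Lemma tree_helly (i0 : Y) : exists c, forall u, u \in A -> S u c.
Proof.
case: (boolP [forall u in A, S u i0]) => [/forall_inP all_i0|]; first by exists i0.
rewrite negb_forall_in => /existsP[u /andP[uA ui]].
have [q uq _] := S_meet uA uA.
have qi : q != i0 by apply: contraNneq ui => <-.
have [j tij qB] := branch_exists qi.
exact: helly_from tij (avoiders_in_branch_of uA ui uq qB).
Qed.

End Helly.
End Tree.

Section ParentTree.
Variables (X : finType) (par : X -> X) (root : X) (h : X -> nat).
Hypothesis par_lt : forall x, x != root -> h (par x) < h x.

Definition parent_rel : rel X :=
  [rel a b | ((a == par b) && (b != root)) || ((b == par a) && (a != root))].

Lemma parent_rel_sym : symmetric parent_rel.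
Proof. by move=> a b; rewrite /parent_rel /= orbC. Qed.

Lemma parent_rel_irr : irreflexive parent_rel.
Proof.
move=> a; rewrite /parent_rel /= orbb; apply/negP => /andP[/eqP a_par ar].
by have := par_lt ar; rewrite -a_par ltnn.
Qed.

Lemma connect_parent_closed (P : pred X) r :
  (forall a, P a -> a != r -> a != root /\ P (par a)) ->
  forall a, P a -> connect (restr parent_rel P) a r.
Proof.
move=> closedP a; elim: {a}(h a) {-2}a (leqnn (h a)) => [|N IH] a ha Pa;
  have [->|ar] := eqVneq a r; rewrite ?connect0 //;
  have [aroot Ppa] := closedP a Pa ar.
  by have := par_lt aroot; rewrite ltnNge (leq_trans ha (leq0n _)).
apply: (@connect_trans _ _ (par a)).
  by apply: connect1; rewrite /restr /parent_rel /= eqxx aroot orbT Pa Ppa.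
by apply: IH Ppa; rewrite -ltnS (leq_trans (par_lt aroot) ha).
Qed.

Lemma parent_closed_connected (P : pred X) r :
  (forall a, P a -> a != r -> a != root /\ P (par a)) -> connected_on parent_rel P.
Proof.
move=> closedP x y Px Py; apply: (connect_trans (connect_parent_closed closedP Px)).
rewrite (sym_connect_sym (restr_sym _ parent_rel_sym)).
exact: connect_parent_closed.
Qed.

Lemma parent_rel_connect x y : connect parent_rel x y.
Proof.
have /(_ x y isT isT) : connected_on parent_rel predT.
  by apply: (@parent_closed_connected _ root) => a _ ar.
by apply: connect_sub => a b /restr_sub/connect1.
Qed.

(* A vertex of maximal height on a cycle would have both cycle neighbours
   equal to its parent. *)
Lemma parent_rel_acyclic (c : seq X) : uniq c -> 3 <= size c -> ~~ cycle parent_rel c.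
Proof.
move=> uc sc; apply/negP => cc.
have [x0 x0c] : exists x0, x0 \in c.
  by case: c sc {uc cc} => // x0 c _; exists x0; exact: mem_head.
case: (arg_maxnP h x0c) => x xc xmax.
have to_par w : w \in c -> parent_rel x w -> w = par x.
  move=> wc; rewrite /parent_rel /= => /orP[/andP[/eqP x_par wr]|/andP[/eqP //]].
  by have := xmax w wc; rewrite /geq /= leqNgt {1}x_par par_lt.
case: (rot_to xc) uc cc sc => k c' ec.
rewrite -(rot_uniq k) -(rot_cycle k) -(size_rot k) ec.
have c'c w : w \in c' -> w \in c by move=> wc'; rewrite -(mem_rot k) ec inE wc' orbT.
case: c' ec c'c => [|y [|z s]] // ec c'c.
rewrite cons_uniq => /andP[_]; rewrite cons_uniq => /andP[yzs _].
rewrite (cycle_path x) /= => /and3P[lx xy _] _.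
have lzs : last z s \in z :: s := mem_last z s.
have y_par : y = par x by apply: to_par xy; apply: c'c; exact: mem_head.
have l_par : last z s = par x.
  by apply: to_par; [apply: c'c; rewrite inE lzs orbT | rewrite parent_rel_sym].
by move: yzs; rewrite y_par -l_par lzs.
Qed.

End ParentTree.

Lemma connect_enum_rank (X : finType) (r : rel X) x y :
  connect r x y -> connect (relpre enum_val r) (enum_rank x) (enum_rank y).
Proof.
case/connectP => p pp ->; apply/connectP; exists (map enum_rank p).
  by rewrite path_map; apply: sub_path pp => a b /=; rewrite !enum_rankK.
by rewrite last_map.
Qed.

Section EnumTransfer.
Variables (X : finType) (r : rel X).

Hypotheses (X_gt0 : 0 < #|X|) (r_sym : symmetric r) (r_irr : irreflexive r)
  (r_conn : forall x y, connect r x y)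
  (r_acyc : forall c : seq X, uniq c -> 3 <= size c -> ~~ cycle r c).

Lemma is_tree_enum : is_tree (m := #|X|) (relpre enum_val r).
Proof.
split => //.
- by move=> i j /=; rewrite r_sym.
- by move=> i /=; rewrite r_irr.
- by move=> i j; rewrite -(enum_valK i) -(enum_valK j) connect_enum_rank.
move=> [|i c] // uc sc; apply/negP => cc.
have := r_acyc (c := map enum_val (i :: c)); rewrite size_map map_inj_uniq //.
  by move=> /(_ uc sc) /negP; apply; rewrite /= -map_rcons path_map; exact: cc.
exact: enum_val_inj.
Qed.

Lemma tree_decomposition_enum (T : finType) (e : rel T) (B : X -> {set T}) :
  (forall x, exists a, x \in B a) ->
  (forall x y, e x y -> exists a, x \in B a /\ y \in B a) ->
  (forall x, connected_on r [pred a | x \in B a]) ->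
  tree_decomposition e (relpre enum_val r) (fun i : 'I_#|X| => B (enum_val i)).
Proof.
move=> B_cover B_edge B_conn; split; first exact: is_tree_enum.
- by move=> x; have [a xa] := B_cover x; exists (enum_rank a); rewrite enum_rankK.
- move=> x y /B_edge[a xya]; exists (enum_rank a); by rewrite enum_rankK.
move=> x i j xi xj; have := connect_enum_rank (B_conn x _ _ xi xj).
by rewrite !enum_valK.
Qed.

End EnumTransfer.

Section CliqueMinor.
Variables (T : finType) (e : rel T) (I : finType) (A : {set I}) (C : I -> {set T}).
Hypotheses (C_conn : forall u, u \in A -> connected_on e [pred x | x \in C u])
  (C_neq0 : forall u, u \in A -> C u != set0)
  (C_disj : forall u w, u \in A -> w \in A -> u != w -> [disjoint C u & C w])
  (C_adj : forall u w, u \in A -> w \in A -> u != w ->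
     exists x y, [/\ x \in C u, y \in C w & e x y]).
Variables (m : nat) (t : rel 'I_m) (B : 'I_m -> {set T}).
Hypothesis td : tree_decomposition e t B.

Definition meets_bag (u : I) : pred 'I_m := [pred i | [exists x in C u, x \in B i]].

Lemma bag_connect_meets u x i j :
  x \in C u -> x \in B i -> x \in B j -> connect (restr t (meets_bag u)) i j.
Proof.
case: td => _ _ _ B_sub xC xi xj; apply: connect_sub (B_sub x i j xi xj).
move=> a b /and3P[tab xa xb]; apply: connect1.
by rewrite /restr /meets_bag /= tab /=; apply/andP; split; apply/existsP; exists x; rewrite xC.
Qed.

Lemma meets_bag_connected u : u \in A -> connected_on t (meets_bag u).
Proof.
move=> uA i j; rewrite /meets_bag /= => /existsP[x /andP[xC xi]] /existsP[y /andP[yC yj]].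
have /connectP[p pp yl] := C_conn uA xC yC; rewrite {y yC}yl in yj.
case: td => _ _ B_edge _.
elim: p i x xC xi pp yj => [|z p IH] i x xC xi /=; first by move=> _ /(bag_connect_meets xC xi).
move=> /andP[/and3P[exz _ zC] pp] yj; have [l [xl zl]] := B_edge x z exz.
exact: (connect_trans (bag_connect_meets xC xi xl) (IH l z zC zl pp yj)).
Qed.

Lemma meets_bag_pairwise u w :
  u \in A -> w \in A -> exists2 i, meets_bag u i & meets_bag w i.
Proof.
move=> uA wA; case: td => _ B_cover B_edge _; rewrite /meets_bag.
case: (eqVneq u w) => [<-|uw].
  have /set0Pn[x xC] := C_neq0 uA; have [i xi] := B_cover x.
  by exists i; apply/existsP; exists x; rewrite xC.
have [x [y [xC yC exy]]] := C_adj uA wA uw; have [i [xi yi]] := B_edge x y exy.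
by exists i; apply/existsP; [exists x; rewrite xC | exists y; rewrite yC].
Qed.

Lemma minor_bag_card : #|A| <= \max_(i < m) #|B i|.
Proof.
have [[m_gt0 t_sym t_irr t_conn t_acyc] _ _ _] := td.
have [c Hc] := tree_helly t_sym t_irr t_conn t_acyc meets_bag_connected
  meets_bag_pairwise (Ordinal m_gt0).
have [->|[a0 a0A]] := set_0Vmem A; first by rewrite cards0.
have /set0Pn[x0 _] := C_neq0 a0A.
pose g u := odflt x0 [pick x in C u :&: B c].
have gP u : u \in A -> g u \in C u :&: B c.
  move=> uA; rewrite /g; case: pickP => [x //|none].
  by have /existsP[x /andP[xC xc]] := Hc u uA; have := none x; rewrite inE xC xc.
apply: leq_trans (leq_bigmax c); rewrite -(card_in_imset (f := g)).
  by apply/subset_leq_card/subsetP => _ /imsetP[u uA ->]; have /setIP[] := gP u uA.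
move=> u w uA wA guw; apply: contraTeq isT => uw.
have /setIP[gu _] := gP u uA; have /setIP[gw _] := gP w wA.
by have := disjointFr (C_disj uA wA uw) gu; rewrite guw gw.
Qed.

End CliqueMinor.

Lemma path_consecutive (X : eqType) (x : X) q :
  path [rel a b | (a, b) \in zip (x :: q) q] x q.
Proof.
elim: q x => [//|y q IH] x /=; rewrite inE eqxx /=.
by apply: sub_path (IH y) => a b /= ab; rewrite inE ab orbT.
Qed.

Lemma consecutive_split (X : eqType) (s : seq X) x y :
  (x, y) \in zip s (behead s) -> exists s1 s2, s = s1 ++ x :: y :: s2.
Proof.
elim: s => [//|a s IH]; case: s IH => [//|b s] IH /=.
rewrite inE => /orP[/eqP[-> ->]|/IH[s1 [s2 ->]]]; first by exists [::], s.
by exists (a :: s1), s2.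
Qed.

Definition rk (X : finType) (x : X) : nat := enum_rank x.

Lemma rk_inj (X : finType) : injective (@rk X).
Proof. by move=> x y /ord_inj /enum_rank_inj. Qed.

Lemma rk_neq (X : finType) (x y : X) : rk x < rk y -> x != y.
Proof. by apply: contraTneq => ->; rewrite ltnn. Qed.

Section PseudoClique.
Variables (T : finType) (e : rel T) (V : {set T}) (f : T -> T -> seq T).
Hypotheses (e_sym : symmetric e)
  (f_rev : forall u v, u \in V -> v \in V -> u != v -> f v u = rev (f u v))
  (f_uniq : forall u v, u \in V -> v \in V -> u != v ->
     uniq (f u v) /\ (forall x, x \in f u v -> x \notin V))
  (f_disj : forall u v u' v' x, u \in V -> v \in V -> u != v ->
     u' \in V -> v' \in V -> u' != v' -> x \in f u v -> x \in f u' v' ->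
     (u = u' /\ v = v') \/ (u = v' /\ v = u'))
  (V_cover : forall x, x \in V \/
     exists u v, [/\ u \in V, v \in V, u != v & x \in f u v])
  (e_walk : forall x y, e x y <->
     exists u v, [/\ u \in V, v \in V, u != v & path_edge u v (f u v) x y]).

Lemma walk_path u v : u \in V -> v \in V -> u != v -> path e u (rcons (f u v) v).
Proof.
move=> uV vV uv; apply: sub_path (path_consecutive u (rcons (f u v) v)) => a b ab.
by apply/e_walk; exists u, v; split.
Qed.

Lemma f_notin_V u v x : u \in V -> v \in V -> rk u < rk v -> x \in f u v -> x \notin V.
Proof. by move=> uV vV /rk_neq uv; apply: (f_uniq uV vV uv).2. Qed.

Definition branch_set u : {set T} :=
  u |: \bigcup_(v in V | rk u < rk v) [set x in f u v].

Lemma branch_setP x u : reflect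
  (x = u \/ exists2 v, (v \in V) && (rk u < rk v) & x \in f u v) (x \in branch_set u).
Proof.
apply: (iffP setU1P) => [[->|/bigcupP[v vP]]|[->|[v vP xf]]]; [by left| |by left|].
  by rewrite inE => xf; right; exists v.
by right; apply/bigcupP; exists v; rewrite ?inE.
Qed.

Lemma branch_set_disjoint u w :
  u \in V -> w \in V -> u != w -> [disjoint branch_set u & branch_set w].
Proof.
move=> uV wV uw; apply/pred0P => x /=; apply/negP => /andP[].
move=> /branch_setP[xu|[v /andP[vV ruv] xf]] /branch_setP[xw|[v' /andP[v'V rwv] xf']].
- by rewrite -xu xw eqxx in uw.
- by have := f_notin_V wV v'V rwv xf'; rewrite xu uV.
- by have := f_notin_V uV vV ruv xf; rewrite xw wV.
have [[uw' _]|[uv' vw]] := f_disj uV vV (rk_neq ruv) wV v'V (rk_neq rwv) xf xf'.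
  by rewrite uw' eqxx in uw.
by subst; have := ltn_trans ruv rwv; rewrite ltnn.
Qed.

Lemma branch_set_adjacent u w : u \in V -> w \in V -> u != w ->
  exists x y, [/\ x \in branch_set u, y \in branch_set w & e x y].
Proof.
wlog ruw : u w / rk u < rk w.
  move=> H uV wV uw; case: (ltngtP (rk u) (rk w)) => [r|r|/rk_inj uw']; first exact: H.
    have [x [y [xw yu exy]]] := H w u r wV uV (rk_neq r).
    by exists y, x; rewrite e_sym.
  by rewrite uw' eqxx in uw.
move=> uV wV uw; exists (last u (f u w)), w; split.
- case E: (f u w) => [|y p] /=; apply/branch_setP; [by left | right].
  by exists w; rewrite ?wV ?ruw // E mem_last.
- by apply/branch_setP; left.
by have := walk_path uV wV uw; rewrite rcons_path => /andP[].
Qed.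

Lemma branch_set_connected u :
  u \in V -> connected_on e [pred x | x \in branch_set u].
Proof.
move=> uV; suff from_u x : x \in branch_set u ->
    connect (restr e [pred x | x \in branch_set u]) u x.
  move=> x y /from_u ux /from_u uy; apply: connect_trans uy.
  by rewrite (sym_connect_sym (restr_sym _ e_sym)).
case/branch_setP => [->|[v /andP[vV ruv] xf]]; first exact: connect0.
have := walk_path uV vV (rk_neq ruv); rewrite rcons_path => /andP[uf _].
apply: (path_connect (path_restr _ uf)); last by rewrite inE xf orbT.
apply/allP => z; rewrite inE => /orP[/eqP->|zf]; apply/branch_setP; [by left | right].
by exists v; rewrite ?vV.
Qed.

Lemma pseudo_clique_bag_card m (t : rel 'I_m) (B : 'I_m -> {set T}) :
  tree_decomposition e t B -> #|V| <= \max_(i < m) #|B i|.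
Proof.
apply: (minor_bag_card (C := branch_set) branch_set_connected _
  branch_set_disjoint branch_set_adjacent).
by move=> u _; apply/set0Pn; exists u; apply/branch_setP; left.
Qed.


Definition walk u v : seq T := u :: rcons (f u v) v.

Definition walk_at u v k : T := nth u (walk u v) k.

Lemma walk_at_inner u v k : k < size (f u v) -> walk_at u v k.+1 = nth u (f u v) k.
Proof. by move=> kf; rewrite /walk_at /walk /= nth_rcons kf. Qed.

Lemma walk_at_last u v : walk_at u v (size (f u v)).+1 = v.
Proof. by rewrite /walk_at /walk /= nth_rcons ltnn eqxx. Qed.

Lemma walk_rev u v : u \in V -> v \in V -> u != v -> walk v u = rev (walk u v).
Proof. by move=> uV vV uv; rewrite /walk f_rev // rev_cons rev_rcons. Qed.

Definition inner_index u v (k : nat) :=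
  [&& u \in V, v \in V, rk u < rk v & k < size (f u v)].

Lemma inner_index_lt u v k : inner_index u v k -> k < #|T|.
Proof.
case/and4P => uV vV /rk_neq uv kf; apply: leq_trans kf _.
by rewrite -(card_uniqP (f_uniq uV vV uv).1) max_card.
Qed.

(* The root is [None]; [Some (u, v, k)] is the [k]-th node of the chain for
   the path from [u] to [v] (with [rk u < rk v]), whose parent is node [k - 1],
   or the root when [k = 0].  Triples failing [inner_index] are dummy nodes
   with empty bags. *)
Local Notation node := (option (T * T * 'I_#|T|.+1)).

Definition inner u v k : node := Some (u, v, inord k).

Definition bag (a : node) : {set T} :=
  if a is Some (u, v, k) then
    if inner_index u v k then [set walk_at u v k; walk_at u v k.+1; v] else set0
  else V.

Definition parent (a : node) : node :=
  if a is Some (u, v, k) then (if 0 < k then inner u v k.-1 else None) else None.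

Definition height (a : node) : nat := if a is Some (_, _, k) then k.+1 else 0.

Lemma height_parent a : a != None -> height (parent a) < height a.
Proof.
case: a => [[[u v] k]|//] _ /=; case: ifP => //= k_gt0.
rewrite inordK; last exact: leq_ltn_trans (leq_pred k) (ltn_ord k).
by rewrite ltnS prednK.
Qed.

Lemma inner_val u v k : inner_index u v k -> (inord k : 'I_#|T|.+1) = k :> nat.
Proof. by move=> /inner_index_lt kT; rewrite inordK // ltnW. Qed.

Lemma bag_inner u v k :
  inner_index u v k -> bag (inner u v k) = [set walk_at u v k; walk_at u v k.+1; v].
Proof. by move=> uvk; rewrite /bag /= (inner_val uvk) uvk. Qed.

Lemma bag_card a : #|bag a| <= maxn #|V| 3.
Proof.
case: a => [[[u v] k]|] /=; last exact: leq_maxl.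
case: ifP => _; last by rewrite cards0.
apply: leq_trans (leq_maxr #|V| _).
apply: leq_trans (card_size [:: walk_at u v k; walk_at u v k.+1; v]).
by apply/subset_leq_card/subsetP => z; rewrite !inE -orbA.
Qed.

Lemma walk_step u v k : u \in V -> v \in V -> rk u < rk v -> k <= size (f u v) ->
  exists a, walk_at u v k \in bag a /\ walk_at u v k.+1 \in bag a.
Proof.
move=> uV vV ruv; rewrite leq_eqVlt => /orP[/eqP k_last|kf].
  case: k k_last => [|j] k_last.
    by exists None; rewrite /walk_at /walk /= nth_rcons -k_last ltnn eqxx; split.
  have uvj : inner_index u v j by rewrite /inner_index uV vV ruv -k_last /=.
  by exists (inner u v j); rewrite bag_inner // k_last walk_at_last !inE !eqxx !orbT.
have uvk : inner_index u v k by rewrite /inner_index uV vV ruv kf.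
by exists (inner u v k); rewrite bag_inner // !inE !eqxx !orbT.
Qed.

Lemma bag_edge x y : e x y -> exists a, x \in bag a /\ y \in bag a.
Proof.
case/e_walk => u [v [uV vV uv /consecutive_split[s1 [s2 uv_walk]]]].
wlog ruv : u v x y s1 s2 uV vV uv uv_walk / rk u < rk v.
  move=> wlog_ruv; case: (ltngtP (rk u) (rk v)) => [|rvu|/rk_inj uv'].
  - exact: wlog_ruv uV vV uv uv_walk.
  - have vu_walk : walk v u = rev s2 ++ y :: x :: rev s1.
      by rewrite walk_rev // /walk uv_walk rev_cat !rev_cons !cat_rcons.
    have [a [ya xa]] := wlog_ruv v u y x _ _ vV uV (rk_neq rvu) vu_walk rvu.
    by exists a.
  - by rewrite uv' eqxx in uv.
have size_s1 : size s1 <= size (f u v).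
  have := congr1 size uv_walk; rewrite /= size_rcons size_cat /= !addnS.
  by move=> -[->]; rewrite leq_addr.
have := walk_step uV vV ruv size_s1.
by rewrite /walk_at /walk uv_walk !nth_cat ltnn ltnNge leqnSn subnn subSnn.
Qed.

Lemma edge_node_of x : x \notin V ->
  exists u v, [/\ u \in V, v \in V, rk u < rk v & x \in f u v].
Proof.
move=> xV; case: (V_cover x) => [xV'|[u [v [uV vV uv xf]]]].
  by rewrite xV' in xV.
case: (ltngtP (rk u) (rk v)) => [ruv|rvu|/rk_inj uv']; first by exists u, v.
  by exists v, u; rewrite f_rev // mem_rev.
by rewrite uv' eqxx in uv.
Qed.

Lemma bag_cover x : exists a, x \in bag a.
Proof.
case: (boolP (x \in V)) => [xV|/edge_node_of[u [v [uV vV ruv xf]]]].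
  by exists None.
have uvk : inner_index u v (index x (f u v)) by rewrite /inner_index uV vV ruv index_mem.
exists (inner u v (index x (f u v))).
by rewrite bag_inner // walk_at_inner ?index_mem // nth_index // !inE eqxx orbT.
Qed.

Lemma mem_bag_some u v (k : 'I_#|T|.+1) x : x \in bag (Some (u, v, k)) ->
  inner_index u v k /\ [\/ x = walk_at u v k, x = nth u (f u v) k | x = v].
Proof.
rewrite /bag; case: ifP => [uvk|_]; last by rewrite inE.
rewrite -walk_at_inner; last by case/and4P: uvk.
rewrite !inE -orbA => /or3P[] /eqP x_at; split => //.
- exact: Or31.
- exact: Or32.
- exact: Or33.
Qed.

Lemma inner_index_pred u v k : inner_index u v k -> inner_index u v k.-1.
Proof.
case/and4P => uV vV ruv kf.
by rewrite /inner_index uV vV ruv (leq_ltn_trans (leq_pred k)).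
Qed.

Lemma f_nth_inj u v u' v' j k : inner_index u v j -> inner_index u' v' k ->
  nth u (f u v) j = nth u' (f u' v') k -> [/\ u' = u, v' = v & k = j].
Proof.
case/and4P => uV vV ruv jf /and4P[u'V v'V ru'v' kf] fjk.
have xf : nth u (f u v) j \in f u v by rewrite mem_nth.
have xf' : nth u (f u v) j \in f u' v' by rewrite fjk mem_nth.
case: (f_disj uV vV (rk_neq ruv) u'V v'V (rk_neq ru'v') xf xf') => [[eu ev]|[eu ev]];
  subst; last by have := ltn_trans ruv ru'v'; rewrite ltnn.
split => //; apply/eqP; rewrite -(nth_uniq u' kf jf (f_uniq u'V v'V (rk_neq ruv)).1).
by rewrite fjk.
Qed.

Lemma main_node_parent x a : x \in V -> x \in bag a -> x \in bag (parent a).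
Proof.
case: a => [[[u v] k]|//] xV /mem_bag_some[uvk x_at] /=.
case: (posnP k) => [_|k_gt0]; first exact: xV.
rewrite bag_inner ?inner_index_pred // prednK // !inE.
case: x_at => [->|xf|->]; rewrite ?eqxx ?orbT //.
by move: xV; rewrite xf (negbTE (f_notin_V _ _ _ (mem_nth _ _))) //; case/and4P: uvk.
Qed.

Lemma inner_node_parent u v j a : inner_index u v j ->
  nth u (f u v) j \in bag a -> a != inner u v j ->
  a != None /\ nth u (f u v) j \in bag (parent a).
Proof.
move=> uvj; set x := nth u (f u v) j.
have xV : x \notin V.
  by case/and4P: uvj => uV vV ruv jf; rewrite (f_notin_V uV vV ruv) ?mem_nth.
case: a => [[[u' v'] k]|]; last by rewrite /= (negbTE xV).
move=> /mem_bag_some[u'v'k [x_at|x_f|xv']] a_ne; split => //.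
- case: (posnP k) x_at => [->|k_gt0 x_at].
    rewrite /walk_at /= => xu'.
    by case/and4P: u'v'k => u'V _ _ _; rewrite xu' u'V in xV.
  have u'v'k' := inner_index_pred u'v'k.
  move: x_at; rewrite -(prednK k_gt0) walk_at_inner; last by case/and4P: u'v'k'.
  case/(f_nth_inj uvj u'v'k') => -> -> kj /=; rewrite k_gt0 bag_inner ?kj //.
  by rewrite walk_at_inner ?inE ?eqxx ?orbT //; case/and4P: uvj.
- case: (f_nth_inj uvj u'v'k x_f) => eu ev kj; subst u' v'; move: a_ne.
  suff -> : k = inord j by rewrite /inner eqxx.
  by apply: val_inj; rewrite /= (inner_val uvj).
- by case/and4P: u'v'k => _ v'V _ _; rewrite xv' v'V in xV.
Qed.

Lemma bag_parent_closed x : exists2 r, x \in bag r &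
  forall a, x \in bag a -> a != r -> a != None /\ x \in bag (parent a).
Proof.
case: (boolP (x \in V)) => [xV|/edge_node_of[u [v [uV vV ruv xf]]]].
  by exists None => // a xa aN; split => //; apply: main_node_parent.
have uvk : inner_index u v (index x (f u v)) by rewrite /inner_index uV vV ruv index_mem.
have x_at : nth u (f u v) (index x (f u v)) = x by rewrite nth_index.
exists (inner u v (index x (f u v))).
  by rewrite bag_inner // walk_at_inner ?index_mem // x_at !inE eqxx orbT.
by move=> a; rewrite -{1 3}x_at; apply: inner_node_parent.
Qed.

Lemma pseudo_clique_decomposition :
  tree_decomposition e (relpre enum_val (parent_rel parent None))
    (fun i : 'I_#|{: node}| => bag (enum_val i)).
Proof.
apply: tree_decomposition_enum.
- by apply/card_gt0P; exists None.
- exact: parent_rel_sym.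
- exact: parent_rel_irr height_parent.
- exact: parent_rel_connect height_parent.
- exact: parent_rel_acyclic height_parent.
- exact: bag_cover.
- exact: bag_edge.
move=> x; have [r xr r_closed] := bag_parent_closed x.
exact: parent_closed_connected height_parent _ r r_closed.
Qed.

Lemma max_bag_card : 3 <= #|V| -> \max_(i < #|{: node}|) #|bag (enum_val i)| = #|V|.
Proof.
move=> V_ge3; apply/eqP; rewrite eqn_leq; apply/andP; split.
  by apply/bigmax_leqP => i _; rewrite -(maxn_idPl V_ge3) bag_card.
by apply: leq_trans (leq_bigmax (enum_rank (None : node))); rewrite enum_rankK.
Qed.

End PseudoClique.

Unset Implicit Arguments.

Theorem theorem8 (T : finType) (e : rel T) (n k : nat) :
  symmetric e -> irreflexive e ->
  pseudo_clique e n k -> 3 <= n ->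
  treewidth_eq e (n - 1).
Proof.
move=> e_sym _ [V [f [<- [f_rev [f_uniq [f_disj [V_cover [e_walk _]]]]]]]] V_ge3.
split=> [|m t B td].
  have td := pseudo_clique_decomposition f_rev f_uniq f_disj V_cover e_walk.
  by do 3!eexists; split; [exact: td | rewrite /td_width max_bag_card].
by rewrite /td_width leq_sub2r // (pseudo_clique_bag_card e_sym f_uniq f_disj e_walk td).
Qed.
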